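(* Assume the target tube $\mathscr{T}_N$ is closed, $\mathcal{U}$ is compact, and each $f_k$ is continuous on $\mathcal{X}\times\mathcal{U}$. Let $\alpha\in[0,1]$, $k\in\mathbb{N}_{[0,N-1]}$, and let $\mathcal{E}_1,\dots,\mathcal{E}_M\subseteq\mathcal{W}$ be bounded measurable sets such that $\mathbb{P}\big((w_k,\dots,w_{N-1})\in\mathcal{E}_i^{N-k}\big)=\alpha$ for every $i\in\mathbb{N}_{[1,M]}$. Then $$\bigcup_{m=1}^M\mathcal{R}_k(\mathscr{T}_N,\mathcal{E}_m)\subseteq\mathcal{L}_k(\alpha).$$
   Context: Fix $N\in\mathbb{N}$, $N>0$, and write $\mathbb{N}_{[a,b]}=\{a,a+1,\dots,b\}$. Consider the discrete-time system $x_{k+1}=f_k(x_k,u_k)+w_k$, $k=0,\dots,N-1$, with state $x_k\in\mathcal{X}\subseteq\mathbb{R}^n$, input $u_k\in\mathcal{U}\subseteq\mathbb{R}^m$, disturbance $w_k\in\mathcal{W}\subseteq\mathbb{R}^n$ with $0\in\mathcal{W}$, and $f_k:\mathcal{X}\times\mathcal{U}\to\mathcal{X}$. A target tube is a sequence $\mathscr{T}_N=[\mathcal{T}_0,\dots,\mathcal{T}_N]$ of subsets of $\mathcal{X}$; it is called closed (resp. convex) if every $\mathcal{T}_k$ is closed (resp. convex). In the stochastic setting, $w_0,\dots,w_{N-1}$ are i.i.d. random vectors with an absolutely continuous distribution $\mathbb{P}_w$ on $\mathcal{W}$. A Markov policy is a tuple $\pi=[\mu_0,\dots,\mu_{N-1}]$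 of universally measurable maps $\mu_k:\mathcal{X}\to\mathcal{U}$; $\mathcal{M}$ denotes the set of Markov policies. For $\pi\in\mathcal{M}$ and $x_k=y$, $\mathbb{P}^\pi_k(\cdot\,|\,y)$ denotes the probability law of $(x_{k+1},\dots,x_N)$ generated by $x_{t+1}=f_t(x_t,\mu_t(x_t))+w_t$. The stochastic $\alpha$-level reach set is $\mathcal{L}_k(\alpha)=\{y\in\mathcal{T}_k:\sup_{\pi\in\mathcal{M}}\mathbb{P}^\pi_k(\bigcap_{t=k+1}^N\{x_t\in\mathcal{T}_t\}\,|\,y)\ge\alpha\}$. For $\mathcal{E}\subseteq\mathcal{W}$ and $k\in\mathbb{N}_{[0,N-1]}$, the disturbance minimal reach set $\mathcal{R}_k(\mathscr{T}_N,\mathcal{E})$ is the set of $x_k\in\mathcal{T}_k$ for which there exist state-feedback laws $\nu_t:\mathcal{X}\to\mathcal{U}$, $t\in\mathbb{N}_{[k,N-1]}$ (no measurability required), such that for every disturbance sequence $w_k,\dots,w_{N-1}\in\mathcal{E}$ the trajectory $x_{t+1}=f_t(x_t,\nu_t(x_t))+w_t$ satisfies $x_t\in\mathcal{T}_t$ for all $t\in\mathbb{N}_{[k+1,N]}$; also $\mathcal{R}_N(\mathscr{T}_N,\mathcal{E})=\mathcal{T}_N$. *)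

From HB Require Import structures.
From mathcomp Require Import all_boot all_order all_algebra.
From mathcomp Require Import all_classical all_reals all_analysis.
Set Implicit Arguments. Unset Strict Implicit. Unset Printing Implicit Defensive.
Import Order.TTheory GRing.Theory Num.Theory.
Import numFieldNormedType.Exports.
Local Open Scope classical_set_scope.
Local Open Scope ring_scope.

(* R^n is modelled as row vectors 'rV[R]_n (with the standard product/sup-norm
   topology); [vecB R n] is R^n equipped with its Borel sigma-algebra
   (generated by the open sets). *)
Definition vecB (R : realType) (n : nat) := g_sigma_algebraType (@open 'rV[R]_n).

Section Defs.
Variables (R : realType) (n m : nat).

(* Universal measurability of mu : R^n -> R^m: the preimage of every Borel set
   is measurable for the completion of every Borel probability measure. *)
Definition univ_measurable (mu : 'rV[R]_n -> 'rV[R]_m) : Prop :=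
  forall (nu : probability (vecB R n) R) (B : set (vecB R m)),
    measurable B ->
    exists A1 A2 : set (vecB R n),
      [/\ measurable A1, measurable A2,
          A1 `<=` mu @^-1` B, mu @^-1` B `<=` A2 & nu (A2 `\` A1) = 0%E].

Definition box (a b : 'rV[R]_n) : set 'rV[R]_n :=
  [set x | forall i, a ord0 i <= x ord0 i <= b ord0 i].
Definition box_vol (a b : 'rV[R]_n) : R := \prod_(i < n) (b ord0 i - a ord0 i).
Definition lebesgue_null (A : set 'rV[R]_n) : Prop :=
  forall eps : R, 0 < eps ->
    exists a b : nat -> 'rV[R]_n,
      [/\ (forall j i, a j ord0 i <= b j ord0 i),
          A `<=` \bigcup_j box (a j) (b j)
        & (\sum_(0 <= j <oo) (box_vol (a j) (b j))%:E < eps%:E)%E].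

Definition abs_continuous (Pw : probability (vecB R n) R) : Prop :=
  forall A : set (vecB R n), measurable A -> lebesgue_null A -> Pw A = 0%E.

Definition iid_with_law d (Omega : measurableType d) (P : probability Omega R)
    (w : nat -> Omega -> 'rV[R]_n) (N : nat) (Pw : probability (vecB R n) R) : Prop :=
  [/\ (forall t, (t < N)%N -> measurable_fun setT (w t : Omega -> vecB R n)),
      (forall t (B : set (vecB R n)), (t < N)%N -> measurable B ->
          P (w t @^-1` B) = Pw B)
    & (forall Bs : nat -> set (vecB R n), (forall t, measurable (Bs t)) ->
          P (\bigcap_(t in [set t | (t < N)%N]) (w t @^-1` Bs t))
          = (\prod_(t < N) P (w t @^-1` Bs t))%E)].

(* Trajectory started at x_k = y under feedback pi and disturbances ws:
   traj j = x_{k+j}. *)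
Fixpoint traj (f : nat -> 'rV[R]_n -> 'rV[R]_m -> 'rV[R]_n)
    (pi : nat -> 'rV[R]_n -> 'rV[R]_m) (k : nat) (y : 'rV[R]_n)
    (ws : nat -> 'rV[R]_n) (j : nat) : 'rV[R]_n :=
  match j with
  | 0 => y
  | j'.+1 => let x := traj f pi k y ws j' in
             f (k + j')%N x (pi (k + j')%N x) + ws (k + j')%N
  end.

Definition stays_in (T : nat -> set 'rV[R]_n) (N k : nat)
    (x : nat -> 'rV[R]_n) : Prop :=
  forall j, (1 <= j <= N - k)%N -> T (k + j)%N (x j).

Definition min_reach_set (f : nat -> 'rV[R]_n -> 'rV[R]_m -> 'rV[R]_n)
    (X : set 'rV[R]_n) (U : set 'rV[R]_m) (T : nat -> set 'rV[R]_n) (N : nat)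
    (E : set 'rV[R]_n) (k : nat) : set 'rV[R]_n :=
  [set x | T k x /\
     exists nu : nat -> 'rV[R]_n -> 'rV[R]_m,
       (forall t z, (k <= t < N)%N -> X z -> U (nu t z)) /\
       (forall ws : nat -> 'rV[R]_n, (forall t, (k <= t < N)%N -> E (ws t)) ->
          stays_in T N k (traj f nu k x ws))].

Definition markov_policy (X : set 'rV[R]_n) (U : set 'rV[R]_m) (N : nat)
    (pi : nat -> 'rV[R]_n -> 'rV[R]_m) : Prop :=
  forall t, (t < N)%N -> univ_measurable (pi t) /\ (forall z, X z -> U (pi t z)).

(* probability of a (possibly non-measurable) event, through the inner
   measure; this coincides with the completed probability on the universally
   measurable events considered here *)
Definition inner_prob d (Omega : measurableType d) (P : probability Omega R)
    (S : set Omega) : \bar R :=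
  ereal_sup [set P A | A in [set A | measurable A /\ A `<=` S]].

Definition reach_prob d (Omega : measurableType d) (P : probability Omega R)
    (w : nat -> Omega -> 'rV[R]_n)
    (f : nat -> 'rV[R]_n -> 'rV[R]_m -> 'rV[R]_n) (T : nat -> set 'rV[R]_n)
    (N k : nat) (pi : nat -> 'rV[R]_n -> 'rV[R]_m) (y : 'rV[R]_n) : \bar R :=
  inner_prob P [set om | stays_in T N k (traj f pi k y (fun t => w t om))].

Definition stoch_reach_set d (Omega : measurableType d) (P : probability Omega R)
    (w : nat -> Omega -> 'rV[R]_n)
    (f : nat -> 'rV[R]_n -> 'rV[R]_m -> 'rV[R]_n)
    (X : set 'rV[R]_n) (U : set 'rV[R]_m) (T : nat -> set 'rV[R]_n)
    (N k : nat) (alpha : R) : set 'rV[R]_n :=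
  [set y | T k y /\
     (alpha%:E <= ereal_sup [set reach_prob P w f T N k pi y
                            | pi in markov_policy X U N])%E].

End Defs.

From HB Require Import structures.
From mathcomp Require Import all_boot all_order all_algebra.
From mathcomp Require Import all_classical all_reals all_analysis.
From mathcomp Require Import ring lra zify.
Import Order.TTheory GRing.Theory Num.Theory.
Import numFieldNormedType.Exports.
Set Implicit Arguments. Unset Strict Implicit. Unset Printing Implicit Defensive.
Local Open Scope classical_set_scope.
Local Open Scope ring_scope.

(* A robustly controllable initial state lies in the tube R_k(T, E_i) built
   by backward robust-predecessor recursion.  Continuity of f_t and
   compactness of U make every R_t closed, so the safe inputs at each state
   form a compact set depending on the state through a closed graph; a
   lexicographic descent through dyadic subcubes selects such an input Borel
   measurably.  The resulting Markov policy keeps the state in the tube as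
   long as every disturbance lies in E_i, an event of probability alpha, so
   the reach probability of the policy is at least alpha. *)

Section product_topology.
Context {S V : topologicalType}.

Lemma nbhs_setX (x : S) (y : V) A B :
  nbhs x A -> nbhs y B -> nbhs (x, y) (A `*` B).
Proof. by move=> xA yB; exists (A, B). Qed.

Lemma nbhs_pairP (x : S) (y : V) Z : nbhs (x, y) Z ->
  exists A B, [/\ nbhs x A, nbhs y B & A `*` B `<=` Z].
Proof. by case=> -[A B] /= [xA yB] ABZ; exists A, B. Qed.

Lemma closed_compact_proj (H : set (S * V)) (K : set V) :
  closed H -> compact K -> closed [set x | exists u, K u /\ H (x, u)].
Proof.
move=> cH cK x0 clx0.
pose B (A : set S) := [set u | K u /\ exists x, A x /\ H (x, u)].
pose F := filter_from (nbhs x0) B.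
have FF : Filter F.
  apply: filter_from_filter; first by exists setT; exact: filterT.
  move=> A1 A2 x0A1 x0A2; exists (A1 `&` A2); first exact: filterI.
  by move=> u [Ku [x [[A1x A2x] Hxu]]]; split; split=> //; exists x.
have PF : ProperFilter F.
  apply: filter_from_proper => A x0A.
  have [z [[u [Ku Hzu]] Az]] := clx0 A x0A.
  by exists u; split=> //; exists z.
have FK : F K by exists setT; [exact: filterT | move=> u []].
have [u0 [Ku0 clu0]] := cK F PF FK.
exists u0; split=> //; apply: cH => Z /nbhs_pairP[A [A' [x0A u0A' AA'Z]]].
have [u [[Ku [x [Ax Hxu]]] A'u]] :=
  clu0 (B A) A' (@in_filter_from _ _ (nbhs x0) B A x0A) u0A'.
by exists (x, u); split=> //; apply: AA'Z.
Qed.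

Lemma closed_slice (H : set (S * V)) z : closed H -> closed [set u | H (z, u)].
Proof.
move=> cH u clu; apply: cH => Z /nbhs_pairP[A [A' [zA uA' AA'Z]]].
have [v [Hzv A'v]] := clu A' uA'.
by exists (z, v); split=> //; apply: AA'Z; split=> //=; exact: nbhs_singleton.
Qed.

End product_topology.

Lemma closed_vecB_measurable (R : realType) n (A : set 'rV[R]_n) :
  closed A -> measurable (A : set (vecB R n)).
Proof.
move=> cA; rewrite -(setCK A); apply: measurableC; apply: sub_sigma_algebra.
by rewrite /= openC.
Qed.

Lemma box_closed (R : realType) m (a b : 'rV[R]_m) : closed (box a b).
Proof.
have -> : box a b = \bigcap_(i in setT)
    ([set y : 'rV[R]_m | a ord0 i <= y ord0 i] `&` [set y | y ord0 i <= b ord0 i]).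
  apply/seteqP; split => y /=; first by move=> yab i _; apply/andP.
  by move=> yab i; have [-> ->] := yab i I.
apply: closed_bigI => i _; apply: closedI.
  apply: (@preimage_closed _ _ (fun y : 'rV[R]_m => y ord0 i) [set r | a ord0 i <= r]).
    by move=> ? _; exact: coord_continuous.
  exact: closed_ge.
apply: (@preimage_closed _ _ (fun y : 'rV[R]_m => y ord0 i) [set r | r <= b ord0 i]).
  by move=> ? _; exact: coord_continuous.
exact: closed_le.
Qed.

Lemma normr_entry_le (R : realType) m (v : 'rV[R]_m) i : `|v ord0 i| <= `|v|.
Proof.
have /mapP[j _ ->] : `|v ord0 i| \in [seq `|v x.1 x.2| | x : 'I_1 * 'I_m].
  by apply/mapP; exists (ord0, i) => //=; rewrite mem_enum.
by rewrite [leRHS]/Num.Def.normr /= mx_normrE; apply/bigmax_geP; right; exists j.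
Qed.

Lemma compact_sub_box (R : realType) m (A : set 'rV[R]_m) : compact A ->
  exists (a : 'rV[R]_m) (L : R), 0 < L /\ A `<=` box a (a + L *: const_mx 1).
Proof.
move=> cA; have [M [_ AM]] := compact_bounded cA.
pose M' := `|M| + 1.
have MM' : M < M' by rewrite /M'; have := ler_norm M; lra.
have M'_gt0 : 0 < M' by rewrite /M'; have := normr_ge0 M; lra.
exists (const_mx (- M')), (M' + M'); split; first lra.
move=> u Au i; rewrite !mxE mulr1.
have := le_trans (normr_entry_le u i) (AM _ MM' u Au).
by rewrite ler_norml => /andP[? ?]; apply/andP; split; lra.
Qed.

Lemma measurable_cst_set d (T : measurableType d) (P : Prop) :
  measurable [set _ : T | P].
Proof.
have [p|np] := pselect P.
  by have -> : [set _ : T | P] = setT by apply/seteqP; split.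
by have -> : [set _ : T | P] = set0 by apply/seteqP; split.
Qed.

Lemma countable_bigcapT_measurable d (T : measurableType d) (I : countType)
    (F : I -> set T) :
  (forall i, measurable (F i)) -> measurable (\bigcap_i F i).
Proof.
move=> mF; rewrite -[X in measurable X]setCK setC_bigcap; apply: measurableC.
by apply: countable_bigcupT_measurable => [|i]; [exact: countableP | exact/measurableC].
Qed.

Section dyadic_selection.
Context d (D : measurableType d) (R : realType) (m : nat).
Variables (K : D -> set 'rV[R]_m) (a0 u0 : 'rV[R]_m) (L : R).
Hypothesis L_gt0 : 0 < L.
Hypothesis K_compact : forall x, compact (K x).
Hypothesis K_box : forall x, K x `<=` box a0 (a0 + L *: const_mx 1).
Hypothesis measurable_K_meets_box :
  forall a b, measurable [set x | K x `&` box a b !=set0].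

Local Notation digit := {ffun 'I_m -> bool}.

Definition side j : R := L / 2 ^+ j.

Lemma sideS j : side j = side j.+1 + side j.+1.
Proof.
rewrite /side exprS; have h : (2 ^+ j : R) != 0 by rewrite expf_neq0 // pnatr_eq0.
by field; rewrite h.
Qed.

Lemma side_ge0 j : 0 <= side j.
Proof. by rewrite /side divr_ge0 // ?exprn_ge0 // ltW. Qed.

Lemma side_lt e : 0 < e -> exists j, side j < e.
Proof.
move=> e_gt0; have := archi_boundP (divr_ge0 (ltW L_gt0) (ltW e_gt0)).
set j := Num.bound (L / e) => Le_j; exists j.
rewrite /side ltr_pdivrMr ?exprn_gt0 // mulrC -ltr_pdivrMr //.
apply: lt_le_trans Le_j _; rewrite -natrX ler_nat; exact/ltnW/ltn_expl.
Qed.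

(* A digit b selects, in each coordinate i, the lower (b i = false) or upper
   half of the current cube; a list of digits, last digit first, addresses a
   dyadic subcube of the initial box. *)
Fixpoint corner (p : seq digit) : 'rV[R]_m :=
  if p is b :: q then corner q + side (size q).+1 *: \row_i ((b i)%:R : R) else a0.

Definition cube (p : seq digit) :=
  box (corner p) (corner p + side (size p) *: const_mx 1).

Lemma cube_nil : cube [::] = box a0 (a0 + L *: const_mx 1).
Proof. by rewrite /cube /side expr0 divr1. Qed.

Lemma cubeP p u : cube p u <->
  forall i, corner p ord0 i <= u ord0 i /\ u ord0 i <= corner p ord0 i + side (size p).
Proof.
rewrite /cube /box; split => pu i; move: (pu i); rewrite !mxE mulr1; first by move/andP.
by move=> [-> ->].
Qed.

Lemma corner_cons b p i :
  corner (b :: p) ord0 i = corner p ord0 i + (if b i then side (size p).+1 else 0).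
Proof. by rewrite /= !mxE; case: (b i); rewrite ?mulr1 ?mulr0. Qed.

Lemma cube_cons_sub b p : cube (b :: p) `<=` cube p.
Proof.
move=> u /cubeP bpu; apply/cubeP => i; move: (bpu i); rewrite corner_cons /=.
have := sideS (size p); have := side_ge0 (size p).+1.
by case: (b i) => *; split; lra.
Qed.

Lemma cube_cover p u : cube p u -> exists b, cube (b :: p) u.
Proof.
move=> /cubeP pu; exists [ffun i => corner p ord0 i + side (size p).+1 <= u ord0 i].
apply/cubeP => i; rewrite corner_cons ffunE /=; have [? ?] := pu i.
have := sideS (size p).
by case: ifP => [|/negbT]; rewrite ?ltNge -?ltNge => *; split; lra.
Qed.

Lemma cube_dist p u v i : cube p u -> cube p v ->
  `|u ord0 i - v ord0 i| <= side (size p).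
Proof.
move=> /cubeP pu /cubeP pv; have [? ?] := pu i; have [? ?] := pv i.
by rewrite ler_norml; apply/andP; split; lra.
Qed.

Lemma cube_sub_ball p u e : cube p u -> side (size p) < e -> cube p `<=` ball u e.
Proof.
move=> pu lt_e v pv; split; first exact: le_lt_trans (side_ge0 _) lt_e.
move=> i j; rewrite (ord1 i) -ball_normE /ball_ /=.
exact: le_lt_trans (cube_dist j pu pv) lt_e.
Qed.

Definition next_digit x (p : seq digit) : digit :=
  odflt [ffun => false] [pick b : digit | `[< K x `&` cube (b :: p) !=set0 >] ].

Fixpoint cube_chain x j : seq digit :=
  if j is j'.+1 then next_digit x (cube_chain x j') :: cube_chain x j' else [::].

Lemma size_cube_chain x j : size (cube_chain x j) = j.
Proof. by elim: j => //= j ->. Qed.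

Lemma measurable_K_nonempty : measurable [set x | K x !=set0].
Proof.
have -> : [set x | K x !=set0] = [set x | K x `&` cube [::] !=set0].
  apply/seteqP; split => x /=; last by move=> [u [Ku _]]; exists u.
  by move=> [u Ku]; exists u; split => //; rewrite cube_nil; exact: K_box Ku.
exact: measurable_K_meets_box.
Qed.

Lemma measurable_next_digit p (S : set digit) :
  measurable [set x | S (next_digit x p)].
Proof.
pose g x : {ffun digit -> bool} := [ffun b => `[< K x `&` cube (b :: p) !=set0 >] ].
have gE x : next_digit x p = odflt [ffun => false] [pick b | g x b].
  by rewrite /next_digit; congr odflt; apply: eq_pick => b; rewrite ffunE.
have -> : [set x | S (next_digit x p)] = \bigcup_phi
    ([set x | g x = phi] `&` [set _ | S (odflt [ffun => false] [pick b | phi b])]).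
  apply/seteqP; split => x /=; first by rewrite gE => Sx; exists (g x).
  by move=> [phi _ [<- Sx]]; rewrite gE.
apply: countable_bigcupT_measurable => [|phi]; first exact: countableP.
apply: measurableI; last exact: measurable_cst_set.
have -> : [set x | g x = phi] = \bigcap_b [set x | g x b = phi b].
  apply/seteqP; split => x /=; first by move=> <-.
  by move=> gphi; apply/ffunP => b; exact: (gphi b I).
apply: countable_bigcapT_measurable => b.
have gbE : [set x | g x b] = [set x | K x `&` cube (b :: p) !=set0].
  by apply/seteqP; split => x /=; rewrite ffunE => /asboolP.
case: (phi b).
  by rewrite -[X in measurable X]/[set x | g x b] gbE; exact: measurable_K_meets_box.
have -> : [set x | g x b = false] = ~` [set x | g x b].
  by apply/seteqP; split => x /=; [move=> -> | move/negP/negbTE].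
by rewrite gbE; exact/measurableC/measurable_K_meets_box.
Qed.

Lemma measurable_cube_chain j (S : set (seq digit)) :
  measurable [set x | S (cube_chain x j)].
Proof.
elim: j S => [|j IHj] S /=; first exact: measurable_cst_set.
have -> : [set x | S (next_digit x (cube_chain x j) :: cube_chain x j)] =
    \bigcup_(q : seq digit)
      ([set x | cube_chain x j = q] `&` [set x | S (next_digit x q :: q)]).
  apply/seteqP; split => x /=; first by move=> Sx; exists (cube_chain x j).
  by move=> [q _ [<-]].
apply: countable_bigcupT_measurable => [|q]; first exact: countableP.
apply: measurableI; first exact: (IHj [set q' | q' = q]).
exact: (measurable_next_digit q [set b | S (b :: q)]).
Qed.

Lemma cube_chain_meets x : K x !=set0 -> forall j, K x `&` cube (cube_chain x j) !=set0.
Proof.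
move=> [u Ku]; elim => [|j [v [Kv chain_v]]] /=.
  by exists u; split => //; rewrite cube_nil; exact: K_box Ku.
have [b bv] := cube_cover chain_v.
rewrite /next_digit; case: pickP => [b' /asboolP //|none].
by move: (none b); rewrite asboolT //; exists v.
Qed.

Lemma cube_chain_antitone x i j : (i <= j)%N ->
  cube (cube_chain x j) `<=` cube (cube_chain x i).
Proof.
move=> /subnK <-; elim: (j - i)%N => [|k IHk] //= u.
by rewrite ?addSn => /cube_cons_sub; exact: IHk.
Qed.

Lemma cube_chain_cluster x : K x !=set0 ->
  exists u, K x u /\ forall j, cube (cube_chain x j) u.
Proof.
move=> Kx.
pose F := filter_from setT (fun j => K x `&` cube (cube_chain x j)).
have FF : Filter F.
  apply: filter_fromT_filter; first by exists 0%N.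
  move=> i j; exists (maxn i j) => u [Ku chain_u]; split; split => //.
    by apply: cube_chain_antitone chain_u; exact: leq_maxl.
  by apply: cube_chain_antitone chain_u; exact: leq_maxr.
have PF : ProperFilter F.
  by apply: filter_from_proper => j _; exact: cube_chain_meets.
have FK : F (K x) by exists 0%N => // u [].
have [u [Ku clu]] := @K_compact x F PF FK.
exists u; split => // j; apply: box_closed => A uA.
have [z [[_ chain_z] Az]] :=
  clu _ A (@in_filter_from _ _ setT (fun j => K x `&` cube (cube_chain x j)) j I) uA.
by exists z.
Qed.

Definition dyadic_sel x : 'rV[R]_m :=
  match pselect (exists u, K x u /\ forall j, cube (cube_chain x j) u) with
  | left h => proj1_sig (cid h)
  | right _ => u0
  end.

Lemma dyadic_sel_in x : K x !=set0 ->
  K x (dyadic_sel x) /\ forall j, cube (cube_chain x j) (dyadic_sel x).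
Proof.
rewrite /dyadic_sel; case: pselect => [h _ | h /cube_chain_cluster //].
by case: (cid h).
Qed.

Lemma dyadic_sel_out x : ~ (K x !=set0) -> dyadic_sel x = u0.
Proof.
move=> Kx0; rewrite /dyadic_sel; case: pselect => // h.
by exfalso; case: h => u [Ku _]; apply: Kx0; exists u.
Qed.

Lemma measurable_dyadic_sel : measurable_fun setT (dyadic_sel : D -> vecB R m).
Proof.
apply: (@measurability _ _ D (vecB R m) setT dyadic_sel open) => //.
move=> _ [V oV <-]; rewrite setTI.
have -> : dyadic_sel @^-1` V =
    ([set x | K x !=set0] `&` \bigcup_j [set x | cube (cube_chain x j) `<=` V]) `|`
    (~` [set x | K x !=set0] `&` [set _ | V u0]).
  apply/seteqP; split => x /=.
    move=> Vx; have [Kx|Kx] := pselect (K x !=set0); last first.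
      by right; rewrite -(dyadic_sel_out Kx).
    left; split => //; have [_ chain_x] := dyadic_sel_in Kx.
    move: oV; rewrite openE => /(_ _ Vx) /nbhs_ballP [e e_gt0 ballV].
    have [j lt_e] := side_lt e_gt0; exists j => //.
    apply: subset_trans ballV; apply: cube_sub_ball (chain_x j) _.
    by rewrite size_cube_chain.
  move=> [[Kx [j _ chainV]] | [Kx Vu0]]; last by rewrite dyadic_sel_out.
  by apply: chainV; have [_] := dyadic_sel_in Kx; apply.
apply: measurableU; apply: measurableI.
- exact: measurable_K_nonempty.
- apply: bigcup_measurable => j _.
  exact: (measurable_cube_chain j [set p | cube p `<=` V]).
- exact/measurableC/measurable_K_nonempty.
- exact: measurable_cst_set.
Qed.

Lemma exists_measurable_selection : exists s : D -> 'rV[R]_m,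
  [/\ measurable_fun setT (s : D -> vecB R m),
      forall x, K x !=set0 -> K x (s x)
    & forall x, ~ (K x !=set0) -> s x = u0].
Proof.
exists dyadic_sel; split => [|x /dyadic_sel_in []//|x]; last exact: dyadic_sel_out.
exact: measurable_dyadic_sel.
Qed.

End dyadic_selection.

(* [robust_tube t] is the paper's R_t(T_N, E), built by the backward recursion
   R_N = T_N, R_t = robust predecessor of R_{t+1}; it is indexed by the number
   N - t of remaining steps so that the recursion is structural. *)
Section robust_tube.
Variables (R : realType) (n m N : nat) (X : set 'rV[R]_n) (U : set 'rV[R]_m)
  (f : nat -> 'rV[R]_n -> 'rV[R]_m -> 'rV[R]_n) (T : nat -> set 'rV[R]_n)
  (E : set 'rV[R]_n).

Definition safe_pairs t (C : set 'rV[R]_n) : set ('rV[R]_n * 'rV[R]_m) :=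
  [set p | [/\ T t p.1, U p.2 & forall e, E e -> C (f t p.1 p.2 + e)]].

Definition robust_pre t C := [set z | exists u, safe_pairs t C (z, u)].

Fixpoint robust_tube_rev j :=
  if j is j'.+1 then robust_pre (N - j'.+1) (robust_tube_rev j') else T N.

Definition robust_tube t := robust_tube_rev (N - t).

Lemma robust_tubeN : robust_tube N = T N.
Proof. by rewrite /robust_tube subnn. Qed.

Lemma robust_tubeS t : (t < N)%N -> robust_tube t = robust_pre t (robust_tube t.+1).
Proof.
move=> tN; rewrite /robust_tube (_ : N - t = (N - t.+1).+1)%N /=; last by lia.
by rewrite (_ : N - (N - t.+1).+1 = t)%N //; lia.
Qed.

Lemma robust_tube_sub t : (t <= N)%N -> robust_tube t `<=` T t.
Proof.
rewrite leq_eqVlt => /orP[/eqP -> | tN]; first by rewrite robust_tubeN.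
by rewrite robust_tubeS // => z [u []].
Qed.

Lemma eq_traj pi k y ws ws' j :
  (forall t, (t < k + j)%N -> ws t = ws' t) ->
  traj f pi k y ws j = traj f pi k y ws' j.
Proof.
elim: j => [|j IHj] ws_eq //=.
by rewrite IHj => [|t tj]; rewrite ws_eq //; lia.
Qed.

Lemma traj_robust_tube pi k x ws :
  (forall t z, (k <= t < N)%N -> robust_tube t z ->
     forall e, E e -> robust_tube t.+1 (f t z (pi t z) + e)) ->
  (forall t, (k <= t < N)%N -> E (ws t)) -> robust_tube k x ->
  forall j, (j <= N - k)%N -> robust_tube (k + j) (traj f pi k x ws j).
Proof.
move=> pi_inv ws_E tube_x; elim => [|j IHj] jN /=; first by rewrite addn0.
by rewrite addnS; apply: pi_inv; [lia | apply: IHj; lia | apply: ws_E; lia].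
Qed.

(* Padding the disturbances beyond step k + j with an admissible value turns
   a partially admissible sequence into a fully admissible one. *)
Lemma feedback_traj_in_T k x nu ws j : T k x ->
  (forall ws, (forall t, (k <= t < N)%N -> E (ws t)) ->
     stays_in T N k (traj f nu k x ws)) ->
  (forall t, (k <= t < k + j)%N -> E (ws t)) -> (j <= N - k)%N ->
  T (k + j) (traj f nu k x ws j).
Proof.
move=> Tx robust ws_E jN; have [->|j_gt0] := posnP j; first by rewrite addn0.
have Ek : E (ws k) by apply: ws_E; lia.
pose ws' t := if (t < k + j)%N then ws t else ws k.
rewrite (@eq_traj _ _ _ ws ws') => [|t tj]; last by rewrite /ws' tj.
apply: (robust ws') => [t /andP[kt _]|]; last by lia.
by rewrite /ws'; case: ifP => // tj; apply: ws_E; lia.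
Qed.

Hypothesis T_sub_X : forall t, (t <= N)%N -> T t `<=` X.

Lemma min_reach_set_sub_robust_tube k : (k < N)%N ->
  min_reach_set f X U T N E k `<=` robust_tube k.
Proof.
move=> kN x [Tx [nu [nuU robust]]].
suff tube_traj r : forall j, (j + r = N - k)%N -> forall ws,
    (forall t, (k <= t < k + j)%N -> E (ws t)) ->
    robust_tube (k + j) (traj f nu k x ws j).
  by rewrite -[k]addn0; apply: (tube_traj (N - k)%N 0%N _ (fun=> 0)) => // t; lia.
elim: r => [|r IHr] j jr ws ws_E.
  have kjN : (k + j = N)%N by lia.
  have := feedback_traj_in_T Tx robust ws_E (ltac:(lia)).
  by rewrite kjN robust_tubeN.
have kjN : (k + j < N)%N by lia.
have Tz : T (k + j) (traj f nu k x ws j) by apply: feedback_traj_in_T => //; lia.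
rewrite robust_tubeS //; exists (nu (k + j) (traj f nu k x ws j)); split => //.
  by apply: nuU; [lia | exact: T_sub_X (ltnW kjN) _ Tz].
move=> e Ee; pose ws' t := if t == (k + j)%N then e else ws t.
have := IHr j.+1 (ltac:(lia)) ws'.
rewrite addnS /= (@eq_traj _ _ _ ws' ws j) => [|t tj]; last by rewrite /ws' (ltn_eqF tj).
rewrite /ws' eqxx; apply => t tj.
by case: eqP => // tkj; apply: ws_E; lia.
Qed.

Hypothesis T_closed : forall t, (t <= N)%N -> closed (T t).
Hypothesis U_compact : compact U.
Hypothesis f_continuous : forall t, (t < N)%N ->
  {within X `*` U, continuous (fun p : 'rV[R]_n * 'rV[R]_m => f t p.1 p.2)}.

Let U_closed : closed U.
Proof. by apply: compact_closed U_compact; exact: norm_hausdorff. Qed.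

Lemma safe_pairs_closed t C : (t < N)%N -> closed C -> closed (safe_pairs t C).
Proof.
move=> tN cC [z u] cl.
have Tz : T t z.
  apply: T_closed (ltnW tN) _ _ => A zA.
  by have [q [[Tq _ _] [/= Aq _]]] := cl _ (nbhs_setX zA filterT); exists q.1.
have Uu : U u.
  apply: U_closed => A uA.
  by have [q [[_ Uq _] [_ /= Aq]]] := cl _ (nbhs_setX filterT uA); exists q.2.
split=> // e Ee; apply: cC => B fB.
have f_cvg := (subspace_continuousP _ _).1 (f_continuous tN) (z, u)
  (conj (T_sub_X (ltnW tN) Tz) Uu).
have : (fun q => f t q.1 q.2 + e) @ within (X `*` U) (nbhs (z, u)) --> f t z u + e.
  by apply: cvgD => //; exact: cvg_cst.
move=> /(_ B fB) near_B.
have /cl[q [[Tq Uq Cq] Bq]] : nbhs (z, u) [set q | (X `*` U) q -> B (f t q.1 q.2 + e)].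
  exact: near_B.
exists (f t q.1 q.2 + e); split; first exact: Cq.
by apply: Bq; split => //; exact: T_sub_X (ltnW tN) _ Tq.
Qed.

Lemma robust_pre_closed t C : (t < N)%N -> closed C -> closed (robust_pre t C).
Proof.
move=> tN cC.
rewrite (_ : robust_pre t C = [set z | exists u, U u /\ safe_pairs t C (z, u)]).
  exact: closed_compact_proj (safe_pairs_closed tN cC) U_compact.
apply/seteqP; split => z [u]; last by case; exists u.
by move=> zu; exists u; split => //; case: zu.
Qed.

Lemma robust_tube_closed t : closed (robust_tube t).
Proof.
rewrite /robust_tube; move: (leq_subr t N); elim: (N - t)%N => [|j IHj] jN /=.
  exact: T_closed.
by apply: robust_pre_closed; [lia | apply: IHj; lia].
Qed.

Definition robust_feedback t (s : 'rV[R]_n -> 'rV[R]_m) :=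
  [/\ measurable_fun setT (s : vecB R n -> vecB R m), forall z, U (s z)
    & (t < N)%N -> forall z, robust_tube t z -> forall e, E e ->
        robust_tube t.+1 (f t z (s z) + e)].

Lemma robust_feedback_step t u0 : (t < N)%N -> U u0 -> exists s, robust_feedback t s.
Proof.
move=> tN Uu0; pose H := safe_pairs t (robust_tube t.+1).
have cH : closed H := safe_pairs_closed tN (@robust_tube_closed t.+1).
pose K (z : 'rV[R]_n) := [set u | H (z, u)].
have K_sub_U z : K z `<=` U by move=> u [].
have K_compact z : compact (K z).
  apply: (subclosed_compact _ U_compact (K_sub_U z)).
  exact: (closed_slice (z := z) cH).
have [a [L [L_gt0 U_box]]] := compact_sub_box U_compact.
have K_meets a' b' : measurable ([set z | K z `&` box a' b' !=set0] : set (vecB R n)).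
  apply: closed_vecB_measurable.
  rewrite (_ : [set z | _] = [set z | exists u, (U `&` box a' b') u /\ H (z, u)]).
    apply: closed_compact_proj cH _.
    apply: (subclosed_compact _ U_compact); last by move=> u [].
    by apply: closedI; [exact: U_closed | exact: box_closed].
  apply/seteqP; split => z /= [u]; last by move=> [[_ Bu] Hzu]; exists u.
  by move=> [Hzu Bu]; exists u; split => //; split => //; case: Hzu.
have [s [s_meas s_in s_out]] := @exists_measurable_selection _ (vecB R n) R m K a u0 L
  L_gt0 K_compact (fun z => subset_trans (K_sub_U z) U_box) K_meets.
exists s; split => // [z|_ z tube_z e Ee].
  by have [/s_in[]|/s_out->] := pselect (K z !=set0).
have Kz : K z !=set0 by move: tube_z; rewrite robust_tubeS.
by have [_ _] := s_in z Kz; apply.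
Qed.

Lemma robust_policy u0 : U u0 -> exists pi, forall t, robust_feedback t (pi t).
Proof.
move=> Uu0; suff /choice[pi pi_feedback] : forall t, exists s, robust_feedback t s.
  by exists pi.
move=> t; have [tN|Nt] := ltnP t N.
  exact: robust_feedback_step tN Uu0.
exists (fun=> u0); split => [|//|tN]; first exact: measurable_cst.
by rewrite ltnNge Nt in tN.
Qed.

End robust_tube.

Lemma measurable_fun_univ_measurable (R : realType) n m (g : 'rV[R]_n -> 'rV[R]_m) :
  measurable_fun setT (g : vecB R n -> vecB R m) -> univ_measurable g.
Proof.
move=> g_meas nu B mB; exists (g @^-1` B), (g @^-1` B).
have := g_meas measurableT B mB; rewrite setTI => mgB.
by split => //; rewrite setDv measure0.
Qed.

Lemma inner_prob_ge (R : realType) d (Omega : measurableType d)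
    (P : probability Omega R) (A S : set Omega) :
  measurable A -> A `<=` S -> (P A <= inner_prob P S)%E.
Proof. by move=> mA AS; apply: ereal_sup_ubound; exists A. Qed.

Lemma measurable_disturbance_event (R : realType) n d (Omega : measurableType d)
    (w : nat -> Omega -> 'rV[R]_n) (E : set 'rV[R]_n) k N :
  (forall t, (t < N)%N -> measurable_fun setT (w t : Omega -> vecB R n)) ->
  measurable (E : set (vecB R n)) ->
  measurable [set om | forall t, (k <= t < N)%N -> E (w t om)].
Proof.
move=> w_meas mE.
rewrite (_ : [set om | _] = \bigcap_(t in [set t | (k <= t < N)%N]) (w t @^-1` E)).
  apply: bigcap_measurableType => t /andP[_ tN].
  by have := w_meas t tN measurableT E mE; rewrite setTI.
by apply/seteqP; split => om /= h t /h.
Qed.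

Theorem theorem7 (R : realType) (n m N : nat)
  (X : set 'rV[R]_n) (U : set 'rV[R]_m) (W : set 'rV[R]_n)
  (f : nat -> 'rV[R]_n -> 'rV[R]_m -> 'rV[R]_n) (T : nat -> set 'rV[R]_n)
  (d : measure_display) (Omega : measurableType d) (P : probability Omega R)
  (w : nat -> Omega -> 'rV[R]_n) (Pw : probability (vecB R n) R)
  (alpha : R) (k M : nat) (E : nat -> set 'rV[R]_n) :
  (0 < N)%N ->
  W 0 ->
  (forall t x u, (t < N)%N -> X x -> U u -> X (f t x u)) ->
  (forall t, (t <= N)%N -> T t `<=` X) ->
  (forall t om, (t < N)%N -> W (w t om)) ->
  iid_with_law P w N Pw ->
  abs_continuous Pw ->
  (forall t, (t <= N)%N -> closed (T t)) ->
  compact U ->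
  (forall t, (t < N)%N ->
     {within X `*` U, continuous (fun p : 'rV[R]_n * 'rV[R]_m => f t p.1 p.2)}) ->
  0 <= alpha <= 1 ->
  (k < N)%N ->
  (forall i, (1 <= i <= M)%N ->
     [/\ E i `<=` W, [bounded x | x in E i] & measurable (E i : set (vecB R n))]) ->
  (forall i, (1 <= i <= M)%N ->
     P [set om | forall t, (k <= t < N)%N -> E i (w t om)] = alpha%:E) ->
  \bigcup_(i in [set i | (1 <= i <= M)%N]) min_reach_set f X U T N (E i) k
    `<=` stoch_reach_set P w f X U T N k alpha.
Proof.
move=> _ _ _ T_sub_X _ [w_meas _ _] _ T_closed U_compact f_cont _ kN E_prop P_E x
  [i Mi x_reach].
have [_ _ mE] := E_prop i Mi.
have tube_x := min_reach_set_sub_robust_tube T_sub_X kN x_reach.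
have [Tx [nu [nuU _]]] := x_reach.
have Uu0 : U (nu k x) by apply: nuU; [lia | exact: T_sub_X (ltnW kN) _ Tx].
have [pi pi_prop] := robust_policy (E i) T_sub_X T_closed U_compact f_cont Uu0.
split => //; apply: (@le_trans _ _ (reach_prob P w f T N k pi x)); last first.
  apply: ereal_sup_ubound; exists pi => // t _.
  have [pi_meas pi_U _] := pi_prop t.
  by split => [|z _//]; exact: measurable_fun_univ_measurable.
rewrite -(P_E i Mi); apply: inner_prob_ge; first exact: measurable_disturbance_event.
move=> om E_om j /andP[_ jN]; apply: (@robust_tube_sub _ _ _ N U f T (E i)); first by lia.
apply: (traj_robust_tube _ E_om tube_x jN) => t z /andP[_ tN].
by have [_ _] := pi_prop t; apply.
Qed.
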